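(* For the discounted MDP $M_\theta$ and any policy $\pi$, $\mathbb E_\theta[\mathrm{Regret}_\theta(T)]\ge\mathbb E_\theta\big[\sum_{t=1}^TV^*(s_t)-\frac1{1-\gamma}\sum_{t=1}^Tr(s_t,a_t)-\frac{\gamma}{(1-\gamma)^2}\big]$.
   Context: $M_\theta$: two states $x_0,x_1$, actions $\mathcal A=\{-1,1\}^{d-1}$, rewards $r(x_0,a)=0$, $r(x_1,a)=1$, transitions $p(x_1\mid x_0,a)=1/(1+(\delta^{-1}-1)e^{-a^\top\theta})$, $p(x_0\mid x_1,a)=\delta$ (remaining mass on staying), with $\delta=1-\gamma$, discount factor $\gamma\in(0,1)$, and $\theta\in\mathbb R^{d-1}$. A (history-dependent) policy $\pi$ is run from $s_1=x_0$; $\mathbb E_\theta$ is expectation over the resulting trajectory. $V^\pi_t(s)=\mathbb E[\sum_{i\ge0}\gamma^ir(s_{t+i},a_{t+i})\mid s_t=s]$ (given the history), $V^*$ is the optimal discounted value function, and $\mathrm{Regret}_\theta(T)=\sum_{t=1}^TV^*(s_t)-\sum_{t=1}^TV^\pi_t(s_t)$. *)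

From mathcomp Require Import all_boot all_order all_algebra.
From mathcomp Require Import all_classical all_reals all_analysis.
Set Implicit Arguments. Unset Strict Implicit. Unset Printing Implicit Defensive.
Import Order.TTheory GRing.Theory Num.Theory.
Local Open Scope ring_scope.
Local Open Scope classical_set_scope.

Section MDP.
Variables (R : realType) (n : nat).
(* d - 1 = n; actions A = {-1,1}^n encoded as boolean vectors (true = +1). *)
Definition State := bool.
Definition x0 : State := false.
Definition x1 : State := true.
Definition Action := {ffun 'I_n -> bool}.
Definition sgn (b : bool) : R := if b then 1 else -1.
Definition adot (a : Action) (theta : 'I_n -> R) : R :=
  \sum_(i < n) sgn (a i) * theta i.

Definition reward (s : State) (a : Action) : R := if s then 1 else 0.

Definition trans (gamma : R) (theta : 'I_n -> R) (s : State) (a : Action)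
  (s' : State) : R :=
  let delta := 1 - gamma in
  if s then (if s' then 1 - delta else delta)
  else let p := 1 / (1 + (delta^-1 - 1) * expR (- adot a theta)) in
       (if s' then p else 1 - p).

(* A (possibly randomized) history-dependent policy: given the past
   state-action pairs and the current state, a distribution over actions. *)
Definition policy := seq (State * Action) -> State -> Action -> R.
Definition valid_policy (pi : policy) : Prop :=
  (forall h s a, 0 <= pi h s a) /\ (forall h s, \sum_(a : Action) pi h s a = 1).

(* cont gamma theta pi h s k f : expectation of f (history, state) evaluated
   k steps later, given past history h and current state s. *)
Fixpoint cont (gamma : R) (theta : 'I_n -> R) (pi : policy)
  (h : seq (State * Action)) (s : State) (k : nat)
  (f : seq (State * Action) -> State -> R) {struct k} : R :=
  match k with
  | 0 => f h s
  | k'.+1 => \sum_(a : Action) pi h s a *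
       \sum_(s' : State) trans gamma theta s a s' *
          cont gamma theta pi (rcons h (s, a)) s' k' f
  end.

Definition exp_reward (gamma : R) (theta : 'I_n -> R) (pi : policy)
  (h : seq (State * Action)) (s : State) (i : nat) : R :=
  cont gamma theta pi h s i (fun h' s' => \sum_(a : Action) pi h' s' a * reward s' a).

Definition Vpi (gamma : R) (theta : 'I_n -> R) (pi : policy)
  (h : seq (State * Action)) (s : State) : R :=
  limn (fun N => \sum_(i < N) gamma ^+ i * exp_reward gamma theta pi h s i).

Definition Vstar (gamma : R) (theta : 'I_n -> R) (s : State) : R :=
  sup [set v | exists pi : policy, valid_policy pi /\ v = Vpi gamma theta pi [::] s].

(* expectation of a functional of the first T state-action pairs
   (s_1,a_1),...,(s_T,a_T) of the trajectory started at s_1 = x0 *)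
Definition Etraj (gamma : R) (theta : 'I_n -> R) (pi : policy) (T : nat)
  (F : seq (State * Action) -> R) : R :=
  cont gamma theta pi [::] x0 T (fun h _ => F h).

Definition dflt : State * Action := (x0, [ffun _ => true]).

Definition regret (gamma : R) (theta : 'I_n -> R) (pi : policy) (T : nat)
  (h : seq (State * Action)) : R :=
  \sum_(t < T) Vstar gamma theta (nth dflt h t).1
  - \sum_(t < T) Vpi gamma theta pi (take t h) (nth dflt h t).1.

End MDP.
Arguments reward {R n} s a.
Arguments sgn {R} b.

From mathcomp Require Import all_boot all_order all_algebra.
From mathcomp Require Import all_classical all_reals all_analysis.
From mathcomp Require Import ring lra.
Set Implicit Arguments. Unset Strict Implicit. Unset Printing Implicit Defensive.
Import Order.TTheory GRing.Theory Num.Theory.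
Local Open Scope ring_scope.

(* The optimal values appear on both sides and cancel, so it suffices to show
   E[sum_t V^pi_t(s_t)] <= (1-gamma)^-1 E[sum_t r(s_t,a_t)] + gamma/(1-gamma)^2.
   By the tower property, E[V^pi_t(s_t)] is the discounted sum of the mean
   rewards x_(t+i) of the trajectory; cutting it at the horizon T loses at most
   gamma^(T-t)/(1-gamma), because rewards lie in [0,1].  Summed over t, each x_u
   is counted with total weight sum_(t<=u) gamma^(u-t) <= (1-gamma)^-1, and the
   truncation losses add up to at most gamma/(1-gamma)^2. *)

Section DiscountedSums.
Variables (R : realFieldType) (gamma : R).
Hypothesis gamma01 : 0 <= gamma < 1.

Let gamma_ge0 : 0 <= gamma. Proof. by case/andP: gamma01. Qed.
Let discount_gt0 : 0 < 1 - gamma. Proof. by case/andP: gamma01; lra. Qed.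

Lemma geometric_sum_le k : \sum_(i < k) gamma ^+ i <= (1 - gamma)^-1.
Proof.
have geom : (1 - gamma) * \sum_(i < k) gamma ^+ i = 1 - gamma ^+ k.
  by rewrite -[LHS]opprK -mulNr opprB -subrX1 opprB.
rewrite -(ler_pM2l discount_gt0) geom mulfV ?gt_eqF //.
by rewrite gerBl exprn_ge0.
Qed.

Lemma sum_rev_pow_le T : \sum_(t < T) gamma ^+ (T - t) <= gamma / (1 - gamma).
Proof.
case: T => [|k]; first by rewrite big_ord0 divr_ge0 ?(ltW discount_gt0).
rewrite (reindex_inj rev_ord_inj) /=.
under eq_bigr => t _ do rewrite subKn // exprS.
by rewrite -big_distrr ler_wpM2l // geometric_sum_le.
Qed.

Lemma sum_discounted_tail_le (x : nat -> R) T : (forall u, 0 <= x u) ->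
  \sum_(t < T) \sum_(i < T - t) gamma ^+ i * x (t + i)%N <=
  (1 - gamma)^-1 * \sum_(u < T) x u.
Proof.
move=> x_ge0; elim: T => [|T IH]; first by rewrite !big_ord0 mulr0.
have split_last : \sum_(t < T.+1) \sum_(i < T.+1 - t) gamma ^+ i * x (t + i)%N =
    \sum_(t < T) \sum_(i < T - t) gamma ^+ i * x (t + i)%N +
    (\sum_(t < T.+1) gamma ^+ (T - t)) * x T.
  have -> : \sum_(t < T) \sum_(i < T - t) gamma ^+ i * x (t + i)%N =
      \sum_(t < T.+1) \sum_(i < T - t) gamma ^+ i * x (t + i)%N.
    by rewrite big_ord_recr /= subnn big_ord0 addr0.
  rewrite big_distrl -big_split /=.
  apply: eq_bigr => t _; have tT : (t <= T)%N by rewrite -ltnS.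
  by rewrite subSn // big_ord_recr /= subnKC.
have rev_geom : \sum_(t < T.+1) gamma ^+ (T - t) = \sum_(t < T.+1) gamma ^+ t.
  by rewrite (reindex_inj rev_ord_inj) /=; apply: eq_bigr => t _; rewrite subKn // -ltnS.
rewrite split_last rev_geom [in leRHS]big_ord_recr /= mulrDr lerD //.
by rewrite ler_wpM2r // geometric_sum_le.
Qed.

End DiscountedSums.

Section DiscountedSeries.
Variables (R : realType) (gamma : R).
Hypothesis gamma01 : 0 <= gamma < 1.

Lemma limn_discounted_le (e : nat -> R) K : (forall i, 0 <= e i <= 1) ->
  limn (fun N => \sum_(i < N) gamma ^+ i * e i) <=
  \sum_(i < K) gamma ^+ i * e i + gamma ^+ K / (1 - gamma).
Proof.
move=> e01; set u := fun N => _.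
have [g0 g1] : 0 <= gamma /\ gamma < 1 by case/andP: gamma01.
have term_ge0 i : 0 <= gamma ^+ i * e i by rewrite mulr_ge0 ?exprn_ge0 //; case/andP: (e01 i).
have term_le i : gamma ^+ i * e i <= gamma ^+ i.
  by rewrite ler_piMr ?exprn_ge0 //; case/andP: (e01 i).
have u_le_geom N : u N <= \sum_(i < N) gamma ^+ i by apply: ler_sum => i _.
have u_tail N : (K <= N)%N -> u N <= u K + gamma ^+ K / (1 - gamma).
  move=> /subnKC <-; rewrite /u big_split_ord lerD2l /=.
  apply: le_trans (ler_sum _ (fun i _ => term_le _)) _.
  under eq_bigr => i _ do rewrite exprD.
  by rewrite -big_distrr ler_wpM2l ?exprn_ge0 // geometric_sum_le.
apply: limr_le; last by exists K => // N; exact: u_tail.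
apply: nondecreasing_is_cvgn.
  by apply/nondecreasing_seqP => N; rewrite /u big_ord_recr lerDl term_ge0.
exists (1 - gamma)^-1 => _ [N _ <-].
exact: le_trans (u_le_geom N) (geometric_sum_le gamma01 N).
Qed.

End DiscountedSeries.

Section Kernel.
Variables (R : realType) (n : nat) (gamma : R) (theta : 'I_n -> R).
Hypothesis gamma01 : 0 <= gamma < 1.

Lemma trans_ge0 s a s' : 0 <= trans gamma theta s a s'.
Proof.
have [g0 g1] : 0 <= gamma /\ gamma < 1 by case/andP: gamma01.
have odds_ge1 : 1 <= 1 + ((1 - gamma)^-1 - 1) * expR (- adot a theta).
  rewrite lerDl mulr_ge0 ?expR_ge0 // subr_ge0 invf_ge1; lra.
rewrite /trans; case: s; case: s'; rewrite /=; try lra.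
- by rewrite div1r invr_ge0; lra.
- by rewrite subr_ge0 div1r invf_le1; lra.
Qed.

Lemma trans_sum s a : \sum_s' trans gamma theta s a s' = 1.
Proof. by rewrite big_bool /trans; case: s => /=; ring. Qed.

End Kernel.

Section Expectation.
Variables (R : realType) (n : nat) (gamma : R) (theta : 'I_n -> R) (pi : policy R n).
Hypotheses (gamma01 : 0 <= gamma < 1) (pi_valid : valid_policy pi).

Local Notation history := (seq (State * Action n)).
Local Notation E := (cont gamma theta pi).

Let pi_ge0 h s a : 0 <= pi h s a. Proof. by case: pi_valid. Qed.
Let pi_sum h s : \sum_a pi h s a = 1. Proof. by case: pi_valid. Qed.

Lemma eq_cont h s k f g :
  (forall h' s', size h' = (size h + k)%N -> f h' s' = g h' s') ->
  E h s k f = E h s k g.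
Proof.
elim: k h s => [|k IH] h s fg /=; first by apply: fg; rewrite addn0.
apply: eq_bigr => a _; congr (_ * _); apply: eq_bigr => s' _; congr (_ * _).
by apply: IH => h' s'' hs; apply: fg; rewrite hs size_rcons addSnnS.
Qed.

Lemma cont_const h s k c : E h s k (fun _ _ => c) = c.
Proof.
elim: k h s => [|k IH] h s //=.
under eq_bigr => a _ do under eq_bigr => s' _ do rewrite IH.
under eq_bigr => a _ do rewrite -big_distrl /= trans_sum mul1r.
by rewrite -big_distrl /= pi_sum mul1r.
Qed.

Lemma contD h s k f g :
  E h s k (fun h' s' => f h' s' + g h' s') = E h s k f + E h s k g.
Proof.
elim: k h s => [|k IH] h s //=.
rewrite -big_split /=; apply: eq_bigr => a _.
rewrite -mulrDr -big_split /=; congr (_ * _); apply: eq_bigr => s' _.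
by rewrite IH mulrDr.
Qed.

Lemma contZ h s k c f : E h s k (fun h' s' => c * f h' s') = c * E h s k f.
Proof.
elim: k h s => [|k IH] h s //=.
rewrite big_distrr /=; apply: eq_bigr => a _.
rewrite [RHS]mulrCA [in RHS]big_distrr /=; congr (_ * _); apply: eq_bigr => s' _.
by rewrite IH mulrCA.
Qed.

Lemma contB h s k f g :
  E h s k (fun h' s' => f h' s' - g h' s') = E h s k f - E h s k g.
Proof.
rewrite -[in RHS]mulN1r -contZ -contD.
by congr cont; apply/funext => h'; apply/funext => s'; rewrite mulN1r.
Qed.

Lemma cont_sum I (r : seq I) h s k (F : I -> history -> State -> R) :
  E h s k (fun h' s' => \sum_(i <- r) F i h' s') = \sum_(i <- r) E h s k (F i).
Proof.
elim: r => [|i r IH].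
  rewrite big_nil -[RHS](cont_const h s k); congr cont.
  by apply/funext => h'; apply/funext => s'; rewrite big_nil.
rewrite big_cons -IH -contD; congr cont.
by apply/funext => h'; apply/funext => s'; rewrite big_cons.
Qed.

Lemma ler_cont h s k f g :
  (forall h' s', f h' s' <= g h' s') -> E h s k f <= E h s k g.
Proof.
elim: k h s => [|k IH] h s fg /=; first exact: fg.
apply: ler_sum => a _; apply: ler_wpM2l => //.
apply: ler_sum => s' _; apply: ler_wpM2l; first exact: trans_ge0.
exact: IH.
Qed.

Lemma cont_addn h s j k f : E h s (j + k) f = E h s j (fun h' s' => E h' s' k f).
Proof.
elim: j h s => [|j IH] h s //=.
by apply: eq_bigr => a _; congr (_ * _); apply: eq_bigr => s' _; rewrite IH.
Qed.

Lemma cont_take (F : history -> R) h s k j :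
  (j <= size h)%N -> E h s k (fun h' _ => F (take j h')) = F (take j h).
Proof.
elim: k h s => [|k IH] h s jh //=.
rewrite -[RHS](cont_const h s k.+1 (F (take j h))) /=.
apply: eq_bigr => a _; congr (_ * _); apply: eq_bigr => s' _; congr (_ * _).
rewrite IH ?size_rcons ?(leq_trans jh) // -cats1 takel_cat //.
by rewrite cont_const.
Qed.

Lemma cont_nth (Psi : history -> State * Action n -> R) s t T : (t < T)%N ->
  E [::] s T (fun h _ => Psi (take t h) (nth (dflt n) h t)) =
  E [::] s t (fun h s' => \sum_a pi h s' a * Psi h (s', a)).
Proof.
move=> tT; rewrite -(subnKC tT) cont_addn.
pose G h := Psi (take t h) (nth (dflt n) h t).
have G_take h : Psi (take t h) (nth (dflt n) h t) = G (take t.+1 h).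
  by rewrite /G take_takel // nth_take.
transitivity (E [::] s t.+1 (fun h _ => G h)).
  apply: eq_cont => h' s' /= size_h'.
  under [LHS]eq_cont do rewrite G_take.
  by rewrite cont_take ?size_h' // take_oversize ?size_h'.
rewrite -addn1 cont_addn; apply: eq_cont => h s' /= size_h.
apply: eq_bigr => a _; congr (_ * _).
rewrite /G -cats1 take_size_cat // nth_cat size_h ltnn subnn /=.
by rewrite -big_distrl /= trans_sum mul1r.
Qed.

Definition policy_reward (h : history) (s : State) : R :=
  \sum_a pi h s a * reward s a.

Lemma policy_reward01 h s : 0 <= policy_reward h s <= 1.
Proof.
rewrite /policy_reward -(pi_sum h s) sumr_ge0 ?ler_sum // => a _;
  by rewrite /reward; case: s; rewrite ?mulr1 ?mulr0 ?pi_ge0.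
Qed.

Lemma exp_reward01 h s i : 0 <= exp_reward gamma theta pi h s i <= 1.
Proof.
change (exp_reward _ _ _ h s i) with (E h s i policy_reward).
apply/andP; split; [rewrite -(cont_const h s i 0) | rewrite -[leRHS](cont_const h s i 1)];
  by apply: ler_cont => h' s'; case/andP: (policy_reward01 h' s').
Qed.

Definition mean_reward (t : nat) : R := E [::] x0 t policy_reward.

Lemma Etraj_reward t T : (t < T)%N ->
  Etraj gamma theta pi T (fun h => reward (nth (dflt n) h t).1 (nth (dflt n) h t).2) =
  mean_reward t.
Proof. exact: (cont_nth (fun _ p => reward p.1 p.2)). Qed.

Lemma Etraj_Vpi_le t T : (t < T)%N ->
  Etraj gamma theta pi T (fun h => Vpi gamma theta pi (take t h) (nth (dflt n) h t).1) <=
  \sum_(i < T - t) gamma ^+ i * mean_reward (t + i) + gamma ^+ (T - t) / (1 - gamma).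
Proof.
move=> tT; rewrite /Etraj (cont_nth (fun h p => Vpi gamma theta pi h p.1)) //.
under eq_cont do rewrite /= -big_distrl /= pi_sum mul1r.
apply: le_trans (ler_cont _ _ _ (fun h s =>
  limn_discounted_le gamma01 (T - t) (exp_reward01 h s))) _.
rewrite contD cont_const cont_sum lerD2r le_eqVlt; apply/orP; left; apply/eqP.
by apply: eq_bigr => i _; rewrite contZ -cont_addn.
Qed.

Lemma Etraj_sum_Vpi_le T :
  Etraj gamma theta pi T (fun h =>
    \sum_(t < T) Vpi gamma theta pi (take t h) (nth (dflt n) h t).1) <=
  (1 - gamma)^-1 * Etraj gamma theta pi T (fun h =>
    \sum_(t < T) reward (nth (dflt n) h t).1 (nth (dflt n) h t).2) +
  gamma / (1 - gamma) ^+ 2.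
Proof.
rewrite /Etraj !cont_sum.
have -> : \sum_(t < T) E [::] x0 T (fun h _ =>
    reward (nth (dflt n) h t).1 (nth (dflt n) h t).2) = \sum_(t < T) mean_reward t.
  by apply: eq_bigr => t _; exact: Etraj_reward.
apply: le_trans (ler_sum _ (fun t _ => Etraj_Vpi_le (ltn_ord t))) _.
rewrite big_split -big_distrl /= lerD //.
  apply: sum_discounted_tail_le => // u.
  rewrite /mean_reward -(cont_const [::] x0 u 0); apply: ler_cont => h s.
  by case/andP: (policy_reward01 h s).
have discount_gt0 : 0 < 1 - gamma by case/andP: gamma01; lra.
rewrite expr2 invfM mulrA ler_wpM2r ?invr_ge0 ?(ltW discount_gt0) //.
exact: sum_rev_pow_le.
Qed.

End Expectation.

Theorem lemma39 (R : realType) (n : nat) (gamma : R) (theta : 'I_n -> R)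
  (pi : policy R n) (T : nat) :
  0 < gamma < 1 -> valid_policy pi ->
  Etraj gamma theta pi T (regret gamma theta pi T) >=
  Etraj gamma theta pi T (fun h =>
     \sum_(t < T) Vstar gamma theta (nth (dflt n) h t).1
     - (1 - gamma)^-1 * \sum_(t < T) reward (nth (dflt n) h t).1 (nth (dflt n) h t).2
     - gamma / (1 - gamma) ^+ 2).
Proof.
move=> /andP[/ltW gamma_ge0 gamma_lt1] pi_valid.
have gamma01 : 0 <= gamma < 1 by rewrite gamma_ge0.
have := Etraj_sum_Vpi_le theta gamma01 pi_valid T.
rewrite /Etraj /regret !contB cont_const // contZ.
lra.
Qed.
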